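(* Let $F_1,F_2\colon\mathbf{A}\to\mathbf{B}$ be lenses, and let $E\colon\mathbf{B}\to\mathbf{C}$ be a lens with $E\circ F_1=E\circ F_2$ such that the get functor $UE$ is a coequaliser of $UF_1$ and $UF_2$ in $\mathbf{Cat}$. If $UE$ is a discrete opfibration, then $E$ is a coequaliser of $F_1$ and $F_2$ in $\mathbf{Lens}$.
   Context: A lens $F\colon \mathbf{A}\to\mathbf{B}$ between small categories consists of a functor $F\colon\mathbf{A}\to\mathbf{B}$ (the get functor) together with, for each object $A$ of $\mathbf{A}$, a function $\varphi_{F,A}$ from the set of morphisms of $\mathbf{B}$ with domain $FA$ to the set of morphisms of $\mathbf{A}$ with domain $A$, such that: $F(\varphi_{F,A}b)=b$; $\varphi_{F,A}(\mathrm{id}_{FA})=\mathrm{id}_A$; and $\varphi_{F,A}(b'\circ b)=\varphi_{F,A'}(b')\circ\varphi_{F,A}(b)$ whenever $b$ has domain $FA$, $A'$ is the codomain of $\varphi_{F,A}b$, and $b'$ has domain $FA'$. $\mathbf{Lens}$ is the category of small categories and lenses, with composite of $F\colon\mathbf{A}\to\mathbf{B}$, $G\colon\mathbf{B}\to\mathbf{C}$ having get functor $G\circ F$ and puts $\varphi_{G\circ F,A}(c)=\varphi_{F,A}(\varphi_{G,FA}(c))$. $U\colon\mathbf{Lens}\to\mathbf{Cat}$ sends a lens to its get functor. A functor $F\colon\mathbf{A}\to\mathbf{B}$ is a discrete opfibration if for each object $A$ and each morphism $b$ of $\mathbf{B}$ with domain $FA$ there is a unique morphism $a$ of $\mathbf{A}$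 with domain $A$ and $Fa=b$. *)

(* Plain Rocq (no library): small categories presented by a type of objects,
   a single type of morphisms with dom/cod, identities and composition.
   [comp g f] is g \o f, meaningful when [cod f = dom g]. *)

Record Category := {
  Ob : Type;
  Mor : Type;
  dom : Mor -> Ob;
  cod : Mor -> Ob;
  idm : Ob -> Mor;
  comp : Mor -> Mor -> Mor;
  dom_id : forall x, dom (idm x) = x;
  cod_id : forall x, cod (idm x) = x;
  dom_comp : forall g f, cod f = dom g -> dom (comp g f) = dom f;
  cod_comp : forall g f, cod f = dom g -> cod (comp g f) = cod g;
  comp_id_l : forall f, comp (idm (cod f)) f = f;
  comp_id_r : forall f, comp f (idm (dom f)) = f;
  comp_assoc : forall h g f, cod f = dom g -> cod g = dom h ->
      comp h (comp g f) = comp (comp h g) f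
}.

Arguments dom {c} _.
Arguments cod {c} _.
Arguments idm {c} _.
Arguments comp {c} _ _.

Record Functor (A B : Category) := {
  fo : Ob A -> Ob B;
  fm : Mor A -> Mor B;
  f_dom : forall f, dom (fm f) = fo (dom f);
  f_cod : forall f, cod (fm f) = fo (cod f);
  f_id : forall x, fm (idm x) = idm (fo x);
  f_comp : forall g f, cod f = dom g -> fm (comp g f) = comp (fm g) (fm f)
}.

Arguments fo {A B} _ _.
Arguments fm {A B} _ _.

Definition feq {A B : Category} (F G : Functor A B) : Prop :=
  (forall x, fo F x = fo G x) /\ (forall f, fm F f = fm G f).

Definition fcompose {A B C : Category} (G : Functor B C) (F : Functor A B)
  : Functor A C.
Proof.
  refine {| fo := fun x => fo G (fo F x); fm := fun f => fm G (fm F f) |}.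
  - intro f. rewrite (f_dom _ _ G), (f_dom _ _ F). reflexivity.
  - intro f. rewrite (f_cod _ _ G), (f_cod _ _ F). reflexivity.
  - intro x. rewrite (f_id _ _ F), (f_id _ _ G). reflexivity.
  - intros g f H. rewrite (f_comp _ _ F g f H), (f_comp _ _ G).
    + reflexivity.
    + rewrite (f_cod _ _ F), (f_dom _ _ F), H. reflexivity.
Defined.

(* A lens: get functor plus, for each object a, a put function on the
   morphisms of B with domain (get a); put is given as a total function
   whose values matter only on such morphisms. *)
Record Lens (A B : Category) := {
  get : Functor A B;
  put : Ob A -> Mor B -> Mor A;
  put_dom : forall a b, dom b = fo get a -> dom (put a b) = a;
  put_get : forall a b, dom b = fo get a -> fm get (put a b) = b;
  put_id : forall a, put a (idm (fo get a)) = idm a;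
  put_comp : forall a b b', dom b = fo get a ->
      dom b' = fo get (cod (put a b)) ->
      put a (comp b' b) = comp (put (cod (put a b)) b') (put a b)
}.

Arguments get {A B} _.
Arguments put {A B} _ _ _.

Definition leq {A B : Category} (L M : Lens A B) : Prop :=
  feq (get L) (get M) /\
  (forall a b, dom b = fo (get L) a -> put L a b = put M a b).

Definition lcompose {A B C : Category} (G : Lens B C) (F : Lens A B)
  : Lens A C.
Proof.
  refine {| get := fcompose (get G) (get F);
            put := fun a c => put F a (put G (fo (get F) a) c) |}.
  - simpl. intros a c H. apply (put_dom _ _ F). apply (put_dom _ _ G). exact H.
  - simpl. intros a c H. rewrite (put_get _ _ F).
    + apply (put_get _ _ G). exact H.
    + apply (put_dom _ _ G). exact H.
  - simpl. intro a. rewrite (put_id _ _ G). apply (put_id _ _ F).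
  - simpl. intros a c c' Hc Hc'.
    set (b := put G (fo (get F) a) c).
    assert (Hb : dom b = fo (get F) a) by (apply (put_dom _ _ G); exact Hc).
    assert (Hcb : cod b = fo (get F) (cod (put F a b))).
    { rewrite <- (f_cod _ _ (get F)). rewrite (put_get _ _ F a b Hb). reflexivity. }
    rewrite (put_comp _ _ G (fo (get F) a) c c' Hc).
    2:{ fold b. rewrite Hcb. exact Hc'. }
    fold b. rewrite (put_comp _ _ F a b).
    + rewrite Hcb. reflexivity.
    + exact Hb.
    + rewrite (put_dom _ _ G).
      * exact Hcb.
      * rewrite Hcb. exact Hc'.
Defined.

Definition is_coequaliser_Cat {A B C : Category} (F1 F2 : Functor A B)
    (E : Functor B C) : Prop :=
  feq (fcompose E F1) (fcompose E F2) /\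
  forall (D : Category) (K : Functor B D),
    feq (fcompose K F1) (fcompose K F2) ->
    exists H : Functor C D,
      feq (fcompose H E) K /\
      forall H' : Functor C D, feq (fcompose H' E) K -> feq H' H.

Definition is_coequaliser_Lens {A B C : Category} (F1 F2 : Lens A B)
    (E : Lens B C) : Prop :=
  leq (lcompose E F1) (lcompose E F2) /\
  forall (D : Category) (K : Lens B D),
    leq (lcompose K F1) (lcompose K F2) ->
    exists H : Lens C D,
      leq (lcompose H E) K /\
      forall H' : Lens C D, leq (lcompose H' E) K -> leq H' H.

Definition discrete_opfibration {A B : Category} (F : Functor A B) : Prop :=
  forall (a : Ob A) (b : Mor B), dom b = fo F a ->
    exists! m : Mor A, dom m = a /\ fm F m = b.

(* Functors into an indiscrete category are just functions on objects, so the
   universal property of the coequaliser [UE] in Cat says that [UE] is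
   surjective on objects and that every function on objects of [B] which
   agrees on the images of [UF1] and [UF2] is constant on the fibres of [UE].
   Given a lens [K] with [K F1 = K F2], the functor [H] with [H (UE) = UK]
   becomes a lens by putting [d] at [c] as [UE (put_K b d)] for a chosen [b]
   over [c]; this is independent of [b] because [b |-> (d |-> UE (put_K b d))]
   agrees on [F1 a] and [F2 a].  Since [UE] is a discrete opfibration, [put_E]
   inverts [UE] on morphisms, which gives [H E = K]; uniqueness follows from
   [UE (put_E b c) = c]. *)

From Stdlib Require Import FunctionalExtensionality PropExtensionality
  IndefiniteDescription.

Definition indiscrete (T : Type) : Category.
Proof.
  refine {| Ob := T; Mor := T * T; dom := fst; cod := snd;
            idm := fun x => (x, x); comp := fun g f => (fst f, snd g) |};
    try reflexivity; intros [x y]; reflexivity.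
Defined.

Definition to_indiscrete {X : Category} {T : Type} (g : Ob X -> T)
  : Functor X (indiscrete T).
Proof.
  refine (@Build_Functor X (indiscrete T) g
            (fun f => (g (dom f), g (cod f))) _ _ _ _); try reflexivity.
  - intro x. simpl. rewrite dom_id, cod_id. reflexivity.
  - intros h f Hhf. simpl. rewrite dom_comp, cod_comp by exact Hhf. reflexivity.
Defined.

Lemma feq_to_indiscrete {X : Category} {T : Type}
    (F G : Functor X (indiscrete T)) :
  (forall x, fo F x = fo G x) -> feq F G.
Proof.
  intro Hob. split; [exact Hob |].
  intro f. rewrite (surjective_pairing (fm F f)), (surjective_pairing (fm G f)).
  change ((dom (fm F f), cod (fm F f)) = (dom (fm G f), cod (fm G f))).
  rewrite !f_dom, !f_cod, !Hob. reflexivity.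
Qed.

Section CoequaliserObjects.
Context {A B C : Category} {F1 F2 : Functor A B} {E : Functor B C}.
Hypothesis Hcoeq : is_coequaliser_Cat F1 F2 E.

Lemma coeq_Cat_ob_epi {T : Type} (h h' : Ob C -> T) :
  (forall b, h (fo E b) = h' (fo E b)) -> forall c, h c = h' c.
Proof.
  intros Hhh' c.
  destruct Hcoeq as [[HE _] Huniv].
  destruct (Huniv (indiscrete T) (to_indiscrete (fun b => h (fo E b))))
    as [H [_ Huniq]].
  { apply feq_to_indiscrete. intro a. exact (f_equal h (HE a)). }
  assert (Hh : feq (to_indiscrete h) H)
    by (apply Huniq, feq_to_indiscrete; reflexivity).
  assert (Hh' : feq (to_indiscrete h') H)
    by (apply Huniq, feq_to_indiscrete; intro b; symmetry; apply Hhh').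
  exact (eq_trans (proj1 Hh c) (eq_sym (proj1 Hh' c))).
Qed.

Lemma coeq_Cat_ob_surjective : forall c, exists b, fo E b = c.
Proof.
  intro c.
  rewrite (coeq_Cat_ob_epi (fun c => exists b, fo E b = c) (fun _ => True)).
  - exact I.
  - intro b. apply propositional_extensionality. split; eauto.
Qed.

Lemma coeq_Cat_ob_kernel {T : Type} (g : Ob B -> T) :
  (forall a, g (fo F1 a) = g (fo F2 a)) ->
  forall b b', fo E b = fo E b' -> g b = g b'.
Proof.
  intros Hg b b' Hbb'.
  destruct (proj2 Hcoeq (indiscrete T) (to_indiscrete g)) as [H [[HHg _] _]].
  { apply feq_to_indiscrete. exact Hg. }
  exact (eq_trans (eq_sym (HHg b)) (eq_trans (f_equal (fo H) Hbb') (HHg b'))).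
Qed.

End CoequaliserObjects.

Lemma fm_put_coequalised {A B C D : Category} (F1 F2 : Lens A B)
    (E : Functor B C) (K : Lens B D) :
  feq (fcompose E (get F1)) (fcompose E (get F2)) ->
  leq (lcompose K F1) (lcompose K F2) ->
  forall a d, dom d = fo (get K) (fo (get F1) a) ->
    fm E (put K (fo (get F1) a) d) = fm E (put K (fo (get F2) a) d).
Proof.
  intros [_ HEm] [[HKo _] HKp] a d Hd.
  assert (Hd2 : dom d = fo (get K) (fo (get F2) a))
    by (rewrite Hd; exact (HKo a)).
  rewrite <- (put_get _ _ F1 a (put K (fo (get F1) a) d))
    by (apply put_dom; exact Hd).
  rewrite <- (put_get _ _ F2 a (put K (fo (get F2) a) d))
    by (apply put_dom; exact Hd2).
  exact (eq_trans (f_equal (fm E) (f_equal (fm (get F1)) (HKp a d Hd)))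
                  (HEm _)).
Qed.

(* The graph of [d |-> UE (put_K b d)] on its domain [{d | dom d = UK b}]
   is a function of [b] alone, to which [coeq_Cat_ob_kernel] applies. *)
Lemma put_coeq_invariant {A B C D : Category} {F1 F2 : Lens A B}
    {E : Functor B C} {K : Lens B D} :
  is_coequaliser_Cat (get F1) (get F2) E ->
  leq (lcompose K F1) (lcompose K F2) ->
  forall b b' d, fo E b = fo E b' -> dom d = fo (get K) b ->
    fm E (put K b d) = fm E (put K b' d).
Proof.
  intros Hcoeq HK b b' d Hbb' Hd.
  set (graph := fun b (d : Mor D) (m : Mor C) =>
                  dom d = fo (get K) b /\ m = fm E (put K b d)).
  assert (Hgraph : graph b = graph b').
  { apply (coeq_Cat_ob_kernel Hcoeq graph); [| exact Hbb'].
    intro a. apply functional_extensionality. intro d'.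
    apply functional_extensionality. intro m.
    apply propositional_extensionality. unfold graph.
    assert (HKa : fo (get K) (fo (get F1) a) = fo (get K) (fo (get F2) a))
      by exact (proj1 (proj1 HK) a).
    rewrite <- HKa.
    pose proof (fm_put_coequalised F1 F2 E K (proj1 Hcoeq) HK a d') as HEa.
    split; intros [Hd' Hm]; split; try exact Hd'; rewrite Hm;
      [| symmetry]; exact (HEa Hd'). }
  assert (Hb : graph b d (fm E (put K b d)))
    by (split; [exact Hd | reflexivity]).
  rewrite Hgraph in Hb. exact (proj2 Hb).
Qed.

Lemma put_fm_discrete_opfibration {B C : Category} (E : Lens B C) :
  discrete_opfibration (get E) ->
  forall m, put E (dom m) (fm (get E) m) = m.
Proof.
  intros Hdo m.
  assert (Hd : dom (fm (get E) m) = fo (get E) (dom m)) by apply f_dom.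
  destruct (Hdo _ _ Hd) as [m0 [_ Hm0]].
  transitivity m0; [symmetry |]; apply Hm0; split; try reflexivity.
  - apply put_dom. exact Hd.
  - apply put_get. exact Hd.
Qed.

Section Descent.
Context {B C D : Category} (E : Lens B C) (K : Lens B D) (H : Functor C D).
Hypothesis HK : feq (fcompose H (get E)) (get K).
Let fo_HK (b : Ob B) : fo H (fo (get E) b) = fo (get K) b := proj1 HK b.
Let fm_HK (f : Mor B) : fm H (fm (get E) f) = fm (get K) f := proj2 HK f.
Variable s : Ob C -> Ob B.
Hypothesis Hs : forall c, fo (get E) (s c) = c.
Hypothesis put_invariant : forall b b' d,
  fo (get E) b = fo (get E) b' -> dom d = fo (get K) b ->
  fm (get E) (put K b d) = fm (get E) (put K b' d).

Lemma fo_get_section (c : Ob C) : fo (get K) (s c) = fo H c.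
Proof. rewrite <- fo_HK, Hs. reflexivity. Qed.

Lemma put_section_invariant (b : Ob B) (d : Mor D) :
  dom d = fo (get K) b ->
  fm (get E) (put K (s (fo (get E) b)) d) = fm (get E) (put K b d).
Proof.
  intro Hd. symmetry. apply put_invariant; [symmetry; apply Hs | exact Hd].
Qed.

Definition descend_lens : Lens C D.
Proof.
  refine {| get := H; put := fun c d => fm (get E) (put K (s c) d) |}.
  - intros c d Hd. rewrite <- fo_get_section in Hd.
    rewrite f_dom, put_dom by exact Hd. apply Hs.
  - intros c d Hd. rewrite <- fo_get_section in Hd.
    rewrite fm_HK. apply put_get. exact Hd.
  - intro c. rewrite <- fo_get_section, put_id, f_id. rewrite Hs. reflexivity.
  - intros c d d' Hd Hd'. rewrite <- fo_get_section in Hd.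
    set (m := put K (s c) d) in *.
    assert (Hm : dom m = s c) by (apply put_dom; exact Hd).
    rewrite f_cod in Hd' |- *.
    rewrite fo_HK in Hd'.
    rewrite put_section_invariant by exact Hd'.
    rewrite put_comp by assumption. fold m.
    apply f_comp. symmetry. apply put_dom. exact Hd'.
Defined.

Lemma lcompose_descend_lens :
  discrete_opfibration (get E) -> leq (lcompose descend_lens E) K.
Proof.
  intro Hdo. split; [exact HK |].
  intros b d Hd. simpl in Hd |- *. rewrite fo_HK in Hd.
  rewrite put_section_invariant by exact Hd.
  rewrite <- (put_dom _ _ K b d Hd) at 1.
  apply put_fm_discrete_opfibration. exact Hdo.
Qed.

Lemma leq_descend_lens (H' : Lens C D) :
  feq (get H') H -> leq (lcompose H' E) K -> leq H' descend_lens.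
Proof.
  intros HH' [_ Hput]. split; [exact HH' |].
  intros c d Hd. simpl.
  rewrite <- (Hs c) in Hd.
  rewrite <- (Hput (s c) d Hd). simpl. rewrite put_get.
  - rewrite Hs. reflexivity.
  - apply put_dom. exact Hd.
Qed.

End Descent.

Theorem corollary4p7 (A B C : Category) (F1 F2 : Lens A B) (E : Lens B C) :
  leq (lcompose E F1) (lcompose E F2) ->
  is_coequaliser_Cat (get F1) (get F2) (get E) ->
  discrete_opfibration (get E) ->
  is_coequaliser_Lens F1 F2 E.
Proof.
  intros HEF Hcoeq Hdo. split; [exact HEF |].
  intros D K HK.
  destruct (proj2 Hcoeq D (get K) (proj1 HK)) as [H [HHK Huniq]].
  destruct (functional_choice _ (coeq_Cat_ob_surjective Hcoeq)) as [s Hs].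
  exists (descend_lens E K H HHK s Hs (put_coeq_invariant Hcoeq HK)).
  split.
  - apply lcompose_descend_lens. exact Hdo.
  - intros H' HH'. apply leq_descend_lens; [| exact HH'].
    apply Huniq. exact (proj1 HH').
Qed.
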